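(* Let $X\in\mathbb{R}^{n\times D}$, $y\in\mathbb{R}^n$, $\lambda_2>0$. Let $\mathcal{Q}$ be a partition of $\{1,\dots,D\}$ and $\mathcal{P}$ a partition of $\{1,\dots,n\}$ such that $(\mathcal{P},\mathcal{Q})$ is equitable on $X$ and $(X^\top y)_{j_1}=(X^\top y)_{j_2}$ whenever $j_1,j_2$ share a color of $\mathcal{Q}$. Set $X'=\Pi_{\mathcal{P}}^{\mathrm{Scaled}}X\Pi_{\mathcal{Q}}$, $y'=\Pi_{\mathcal{P}}^{\mathrm{Scaled}}y$, $W'=\Pi_{\mathcal{P}}^\top\Pi_{\mathcal{P}}$, and let $Q'$ be the $|\mathcal{Q}|\times|\mathcal{Q}|$ diagonal matrix with $Q'_{TT}=\lambda_2|T|$. If $w'\in\mathbb{R}^{|\mathcal{Q}|}$ satisfies $\big((X')^\top W'X'+Q'\big)w'=(X')^\top W'y'$ (the optimality condition of the reduced ridge problem), then $\Pi_{\mathcal{Q}}w'=(X^\top X+\lambda_2I)^{-1}X^\top y$.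
   Context: A partition of a finite set is a set of nonempty pairwise disjoint subsets (''colors'') covering it. A pair $(\mathcal{P},\mathcal{Q})$ of partitions of the row and column indices of $A$ is equitable on $A$ if for every $S\in\mathcal{P}$, $T\in\mathcal{Q}$: $\sum_{j\in T}A_{ij}$ is the same for all $i\in S$ and $\sum_{i\in S}A_{ij}$ is the same for all $j\in T$. For a partition $\mathcal{Q}$ of $\{1,\dots,D\}$, $\Pi_{\mathcal{Q}}\in\{0,1\}^{D\times|\mathcal{Q}|}$ has $(\Pi_{\mathcal{Q}})_{jT}=1$ iff $j\in T$; $\Pi^{\mathrm{Scaled}}_{\mathcal{Q}}\in\mathbb{R}^{|\mathcal{Q}|\times D}$ has entries $1/|T|$ if $j\in T$ and $0$ otherwise; similarly for $\mathcal{P}$. *)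

From HB Require Import structures.
From mathcomp Require Import all_boot all_order all_algebra.
Set Implicit Arguments. Unset Strict Implicit. Unset Printing Implicit Defensive.
Import Order.TTheory GRing.Theory Num.Theory.
Local Open Scope ring_scope.

(* A partition of {0,...,N-1} is a set of colours P : {set {set 'I_N}}
   with [partition P [set: 'I_N]] (nonempty, pairwise disjoint, covering). *)
Definition color (N : nat) (P : {set {set 'I_N}}) (k : 'I_#|P|) : {set 'I_N} :=
  enum_val k.

Definition Pi (R : pzRingType) (N : nat) (P : {set {set 'I_N}}) : 'M[R]_(N, #|P|) :=
  \matrix_(j < N, k < #|P|) (if j \in color k then 1 else 0).

Definition PiScaled (R : fieldType) (N : nat) (P : {set {set 'I_N}}) : 'M[R]_(#|P|, N) :=
  \matrix_(k < #|P|, j < N) (if j \in color k then (#|color k|%:R)^-1 else 0).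

Definition equitable (R : pzRingType) (m d : nat) (P : {set {set 'I_m}})
  (Q : {set {set 'I_d}}) (A : 'M[R]_(m, d)) : Prop :=
  forall S T, S \in P -> T \in Q ->
    (forall i1 i2, i1 \in S -> i2 \in S ->
       \sum_(j in T) A i1 j = \sum_(j in T) A i2 j) /\
    (forall j1 j2, j1 \in T -> j2 \in T ->
       \sum_(i in S) A i j1 = \sum_(i in S) A i j2).

From HB Require Import structures.
From mathcomp Require Import all_boot all_order all_algebra.
Import Order.TTheory GRing.Theory Num.Theory.
Set Implicit Arguments. Unset Strict Implicit.
Local Open Scope ring_scope.

(* Write A := Pi_Q and E_P := Pi_P Pi^Scaled_P, the orthogonal projection averaging a vector over
   each colour of P (it is symmetric and fixes the vectors constant on colours).  Equitability says
   that the columns of X A are P-constant and those of X^T Pi_P are Q-constant, so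
   E_P X A = X A, and the reduced normal equations become A^T z = 0 for the residual
   z := (X^T X + lambda I) A w' - X^T y.  The same facts make z Q-constant, i.e. z = E_Q z, hence
   z = E_Q^T z = Pi^Scaled_Q^T (A^T z) = 0, and A w' solves the full ridge normal equations. *)

Section ColorMatrices.
Variables (R : pzRingType) (N : nat) (P : {set {set 'I_N}}).
Local Notation color := (@color N P).

Lemma color_in k : color k \in P.
Proof. exact: enum_valP. Qed.

Lemma mulmx_Pi m (M : 'M[R]_(m, N)) a k :
  (M *m Pi R P) a k = \sum_(i in color k) M a i.
Proof.
rewrite mxE [RHS]big_mkcond /=; apply: eq_bigr => i _; rewrite mxE.
by case: ifP; rewrite ?mulr1 ?mulr0.
Qed.

Definition colorwise_constant m (Z : 'M[R]_(N, m)) :=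
  forall k i1 i2 c, i1 \in color k -> i2 \in color k -> Z i1 c = Z i2 c.

End ColorMatrices.

Section Equitable.
Variables (R : pzRingType) (m d : nat) (P : {set {set 'I_m}}) (Q : {set {set 'I_d}}).
Variable X : 'M[R]_(m, d).
Hypothesis eqPQ : equitable P Q X.

Lemma equitable_mulmx_Pi_constant : colorwise_constant P (X *m Pi R Q).
Proof.
move=> k i1 i2 c i1k i2k; rewrite !mulmx_Pi.
by case: (eqPQ (color_in k) (color_in c)) => rowsum _; apply: rowsum.
Qed.

Lemma equitable_trmx_mulmx_Pi_constant : colorwise_constant Q (X^T *m Pi R P).
Proof.
move=> k j1 j2 c j1k j2k; rewrite !mulmx_Pi.
under eq_bigr do rewrite mxE; under [RHS]eq_bigr do rewrite mxE.
by case: (eqPQ (color_in c) (color_in k)) => _ colsum; apply: colsum.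
Qed.

End Equitable.

Section PartitionMatrices.
Variables (R : numFieldType) (N : nat) (P : {set {set 'I_N}}).
Local Notation color := (@color N P).

Hypothesis partP : partition P [set: 'I_N].

Lemma exists_color i : exists k, i \in color k.
Proof.
case/and3P: partP => /eqP coverP _ _.
have : i \in cover P by rewrite coverP inE.
case/bigcupP=> T TP iT; exists (enum_rank_in TP T).
by rewrite /color enum_rankK_in.
Qed.

Lemma color_uniq i k1 k2 : i \in color k1 -> i \in color k2 -> k1 = k2.
Proof.
case/and3P: partP => _ trivP _ i1 i2; apply: enum_val_inj.
apply: contraTeq isT => ne.
have /pred0P/(_ i) := trivIsetP trivP _ _ (color_in k1) (color_in k2) ne.
by rewrite /= i1 i2.
Qed.

Lemma card_color_neq0 k : (#|color k|%:R : R) != 0.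
Proof.
case/and3P: partP => _ _ P0; rewrite pnatr_eq0 cards_eq0.
by apply: contraNneq P0 => <-; apply: color_in.
Qed.

Lemma sum_indicator_color i k0 (f : 'I_#|P| -> R) : i \in color k0 ->
  \sum_k (if i \in color k then 1 else 0) * f k = f k0.
Proof.
move=> ik0; rewrite (bigD1 k0) //= ik0 mul1r big1 ?addr0 // => k nk0.
case: ifPn => ik; rewrite ?mul0r //.
by case/eqP: nk0; apply: color_uniq ik ik0.
Qed.

Lemma sum_indicator_color_mul k l (a : R) :
  \sum_i (if i \in color k then 1 else 0) * (if i \in color l then a else 0)
  = if k == l then a *+ #|color k| else 0.
Proof.
case: eqP => [<-|nkl]; last first.
  apply: big1 => i _; case: ifPn => ik; rewrite ?mul0r //.
  by case: ifPn => il; rewrite ?mulr0 //; case: nkl; apply: color_uniq ik il.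
rewrite -sumr_const [RHS]big_mkcond /=; apply: eq_bigr => i _.
by case: ifP; rewrite ?mul1r ?mul0r.
Qed.

Lemma trmx_Pi_mul_Pi k l :
  ((Pi R P)^T *m Pi R P) k l = if k == l then #|color k|%:R else 0.
Proof.
by rewrite mxE; under eq_bigr do rewrite !mxE; rewrite sum_indicator_color_mul.
Qed.

Lemma PiScaled_mul_Pi : PiScaled R P *m Pi R P = 1%:M.
Proof.
apply/matrixP => k l; rewrite mxE.
under eq_bigr do rewrite !mxE mulrC.
rewrite sum_indicator_color_mul !mxE eq_sym; case: eqP => // ->.
by rewrite -[_ *+ _]mulr_natr mulVf ?card_color_neq0.
Qed.

Lemma Pi_mul_PiScaled_E i j k : i \in color k ->
  (Pi R P *m PiScaled R P) i j = PiScaled R P k j.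
Proof. by move=> ik; rewrite mxE; under eq_bigr do rewrite mxE; apply: sum_indicator_color. Qed.

Lemma trmx_Pi_mul_PiScaled : (Pi R P *m PiScaled R P)^T = Pi R P *m PiScaled R P.
Proof.
apply/matrixP => i j; rewrite mxE.
have [[ki ik] [kj jk]] := (exists_color i, exists_color j).
rewrite (Pi_mul_PiScaled_E _ jk) (Pi_mul_PiScaled_E _ ik) !mxE.
have [?|nk] := eqVneq kj ki; first by subst; rewrite ik jk.
case: ifPn => [ikj|_]; first by case/eqP: nk; apply: color_uniq ikj ik.
by case: ifPn => // jki; case/eqP: nk; apply: color_uniq jk jki.
Qed.

Lemma trmx_PiScaled_mul_gram : (PiScaled R P)^T *m ((Pi R P)^T *m Pi R P) = Pi R P.
Proof.
by rewrite mulmxA -trmx_mul trmx_Pi_mul_PiScaled -mulmxA PiScaled_mul_Pi mulmx1.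
Qed.

Lemma Pi_mul_PiScaled_id m (Z : 'M[R]_(N, m)) :
  colorwise_constant P Z -> Pi R P *m PiScaled R P *m Z = Z.
Proof.
move=> constZ; apply/matrixP => i c; have [k ik] := exists_color i.
rewrite mxE; under eq_bigr do rewrite (Pi_mul_PiScaled_E _ ik) mxE.
rewrite (bigID (mem (color k))) /= [X in _ + X]big1 ?addr0; last first.
  by move=> j /negbTE ->; rewrite mul0r.
under eq_bigr => j jk do rewrite jk (constZ k j i c jk ik).
by rewrite sumr_const -mulrnAl -mulr_natr mulVf ?mul1r ?card_color_neq0.
Qed.

Lemma colorwise_fixed_trmx_Pi_eq0 m (Z : 'M[R]_(N, m)) :
  Pi R P *m PiScaled R P *m Z = Z -> (Pi R P)^T *m Z = 0 -> Z = 0.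
Proof.
by move=> Zfix PtZ; rewrite -Zfix -trmx_Pi_mul_PiScaled trmx_mul -mulmxA PtZ mulmx0.
Qed.

End PartitionMatrices.

Section EquitableReduction.
Variables (R : numFieldType) (n D : nat) (X : 'M[R]_(n, D)).
Variables (P : {set {set 'I_n}}) (Q : {set {set 'I_D}}).
Hypotheses (partP : partition P [set: 'I_n]) (partQ : partition Q [set: 'I_D]).
Hypothesis eqPQ : equitable P Q X.
Local Notation A := (Pi R Q).
Local Notation X' := (PiScaled R P *m X *m Pi R Q).
Local Notation W' := ((Pi R P)^T *m Pi R P).

Lemma colorwise_fixed_mulmx_Pi : Pi R P *m PiScaled R P *m (X *m A) = X *m A.
Proof. by apply: (Pi_mul_PiScaled_id partP); apply: equitable_mulmx_Pi_constant. Qed.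

Lemma reduced_weight : X'^T *m W' = A^T *m X^T *m Pi R P.
Proof. by rewrite !trmx_mul -!mulmxA trmx_PiScaled_mul_gram. Qed.

Lemma reduced_gram : X'^T *m W' *m X' = A^T *m (X^T *m X) *m A.
Proof.
by rewrite reduced_weight -!mulmxA (mulmxA (Pi R P)) colorwise_fixed_mulmx_Pi !mulmxA.
Qed.

Lemma reduced_rhs (y : 'cV[R]_n) :
  X'^T *m W' *m (PiScaled R P *m y) = A^T *m (X^T *m y).
Proof.
have XAt_fix : A^T *m X^T *m Pi R P *m PiScaled R P = A^T *m X^T.
  by rewrite -mulmxA -trmx_mul -trmx_Pi_mul_PiScaled // -trmx_mul colorwise_fixed_mulmx_Pi.
by rewrite reduced_weight !mulmxA XAt_fix.
Qed.

Lemma colorwise_fixed_gram : A *m PiScaled R Q *m (X^T *m (X *m A)) = X^T *m (X *m A).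
Proof.
have XtB_fix := Pi_mul_PiScaled_id partQ (equitable_trmx_mulmx_Pi_constant eqPQ).
by rewrite mulmxA in XtB_fix; rewrite -colorwise_fixed_mulmx_Pi !mulmxA XtB_fix.
Qed.

End EquitableReduction.

Section RidgeRegression.
Variable R : realFieldType.

Lemma mulmx_trmx_sqr k (v : 'rV[R]_k) : (v *m v^T) 0 0 = \sum_j v 0 j ^+ 2.
Proof. by rewrite mxE; apply: eq_bigr => j _; rewrite mxE expr2. Qed.

Lemma mulmx_trmx_ge0 k (v : 'rV[R]_k) : 0 <= (v *m v^T) 0 0.
Proof. by rewrite mulmx_trmx_sqr; apply: sumr_ge0 => j _; apply: sqr_ge0. Qed.

Lemma mulmx_trmx_eq0 k (v : 'rV[R]_k) : ((v *m v^T) 0 0 == 0) = (v == 0).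
Proof.
apply/idP/eqP => [|->]; last by rewrite mul0mx mxE.
rewrite mulmx_trmx_sqr psumr_eq0 => [/allP v0|j _]; last exact: sqr_ge0.
apply/matrixP => i j; rewrite ord1 !mxE.
by have := v0 j (mem_index_enum j); rewrite sqrf_eq0 => /eqP.
Qed.

(* For a row v in the kernel, 0 = v M v^T = |v X^T|^2 + lambda |v|^2 forces v = 0. *)
Lemma ridge_unitmx n D (X : 'M[R]_(n, D)) (lambda : R) :
  0 < lambda -> X^T *m X + lambda%:M \in unitmx.
Proof.
move=> lambda_gt0; rewrite -row_free_unit -kermx_eq0.
apply/eqP/row_matrixP => i; rewrite row0; set v := row i _.
have /(congr1 (fun M => (M *m v^T) 0 0)) : v *m (X^T *m X + lambda%:M) = 0.
  by rewrite -row_mul mulmx_ker row0.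
rewrite mulmxDr mulmxDl mul_mx_scalar -scalemxAl mul0mx [RHS]mxE.
rewrite [X in X = 0]mxE [X in _ + X = 0]mxE.
have -> : v *m (X^T *m X) *m v^T = (v *m X^T) *m (v *m X^T)^T.
  by rewrite trmx_mul trmxK !mulmxA.
move/eqP; rewrite paddr_eq0 ?mulr_ge0 ?mulmx_trmx_ge0 ?ltW //.
by rewrite mulf_eq0 (gt_eqF lambda_gt0) (mulmx_trmx_eq0 v) /= => /andP[_ /eqP].
Qed.

End RidgeRegression.

Unset Implicit Arguments. Set Strict Implicit.
Theorem mainTheorem8 (R : realFieldType) (n D : nat)
  (X : 'M[R]_(n, D)) (y : 'cV[R]_n) (lambda2 : R)
  (P : {set {set 'I_n}}) (Q : {set {set 'I_D}})
  (w' : 'cV[R]_#|Q|) :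
  0 < lambda2 ->
  partition Q [set: 'I_D] ->
  partition P [set: 'I_n] ->
  equitable P Q X ->
  (forall T j1 j2, T \in Q -> j1 \in T -> j2 \in T ->
     (X^T *m y) j1 0 = (X^T *m y) j2 0) ->
  let X' := PiScaled R P *m X *m Pi R Q in
  let y' := PiScaled R P *m y in
  let W' := (Pi R P)^T *m Pi R P in
  let Q' : 'M[R]_#|Q| :=
    \matrix_(a, b) (if a == b then lambda2 * (#|@color D Q a|%:R) else 0) in
  (X'^T *m W' *m X' + Q') *m w' = X'^T *m W' *m y' ->
  Pi R Q *m w' = invmx (X^T *m X + lambda2%:M) *m X^T *m y.
Proof.
move=> lambda2_gt0 partQ partP eqPQ Xty_const X' y' W' Q' reduced_eq.
have Q'E : Q' = lambda2 *: ((Pi R Q)^T *m Pi R Q).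
  apply/matrixP => a b; rewrite /Q' mxE [RHS]mxE trmx_Pi_mul_Pi //.
  by case: eqP; rewrite ?mulr0.
have Xty_fix : Pi R Q *m PiScaled R Q *m (X^T *m y) = X^T *m y.
  apply: (Pi_mul_PiScaled_id partQ) => k j1 j2 c j1k j2k.
  by rewrite (ord1 c); apply: Xty_const (color_in k) j1k j2k.
set z := X^T *m (X *m Pi R Q) *m w' + lambda2 *: (Pi R Q *m w') - X^T *m y.
have Atz : (Pi R Q)^T *m z = 0.
  apply/eqP; rewrite mulmxBr subr_eq0 -(reduced_rhs partP eqPQ) -reduced_eq.
  rewrite (reduced_gram partP eqPQ) Q'E mulmxDr mulmxDl -scalemxAr -!scalemxAl.
  by rewrite !mulmxA.
have z_fix : Pi R Q *m PiScaled R Q *m z = z.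
  rewrite !mulmxBr !mulmxDr Xty_fix -scalemxAr (mulmxA (_ *m PiScaled R Q)).
  rewrite (colorwise_fixed_gram partP partQ eqPQ) -(mulmxA (Pi R Q)).
  by rewrite (mulmxA (PiScaled R Q)) PiScaled_mul_Pi // mul1mx.
have ridge_eq : (X^T *m X + lambda2%:M) *m (Pi R Q *m w') = X^T *m y.
  move/eqP: (colorwise_fixed_trmx_Pi_eq0 partQ z_fix Atz).
  rewrite /z subr_eq0 => /eqP <-.
  by rewrite mulmxDl mul_scalar_mx !mulmxA.
by rewrite -mulmxA -ridge_eq mulKmx // ridge_unitmx.
Qed.
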